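(* Let $G$ be a word-hyperbolic group with marked finite generating set $A$, let $X=\Gamma(G,A)$ with word metric $d_X$ and $|g|_X=d_X(1,g)$, let $H\le G$ be quasiconvex, and let $Y=\Gamma(G/H,A)$ with simplicial metric $d_Y$. Then there is an integer constant $K_1>0$ (depending only on $G,A,H$) with the following property. Let $g,f\in G$ be elements of minimal $|\cdot|_X$-length in the cosets $Hg$ and $Hf$ respectively. Let $w$ be the label (a word over $A^{\pm1}$) of a near geodesic path in $Y$ from $Hg$ to $Hf$, and let $h\in H$ be such that $hf=g\bar w$, where $\bar w\in G$ is the element represented by $w$. Then $|h|_X\le K_1$.
   Context: A marked finite generating set of $G$ is a map $\pi:A\to G$ from a finite alphabet such that $\pi(A)$ generates $G$. $\Gamma(G/H,A)$ is the graph with vertices the right cosets $Hg$ and, for each $(Hg,a)\in G/H\times A$, an edge from $Hg$ to $Hg\pi(a)$ labeled $a$; $\Gamma(G,A)$ is the case $H=1$. All edges have length one. A path $p$ in a geodesic metric space is near geodesic if $p=p_1p'p_2$ where $p_1,p',p_2$ are geodesic segments and $0\le l(p_i)\le 1$ for $i=1,2$. $H$ quasiconvex means there is $E>0$ such that every geodesic in $X$ with endpoints in $H$ lies in the $E$-neighborhood of $H$. *)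

From mathcomp Require Import all_boot.
Set Implicit Arguments. Unset Strict Implicit. Unset Printing Implicit Defensive.

Record group := Group {
  carrier :> Type;
  gmul : carrier -> carrier -> carrier;
  ginv : carrier -> carrier;
  gone : carrier;
  gmulA : forall x y z, gmul x (gmul y z) = gmul (gmul x y) z;
  gmul1 : forall x, gmul gone x = x;
  gmulV : forall x, gmul (ginv x) x = gone
}.

Section Words.
Variables (G : group) (A : finType) (pi : A -> G).

(* Letters of A^{+-1}: (a, false) stands for a, (a, true) for a^{-1}. *)
Definition letter := (A * bool)%type.

Definition eval_letter (l : letter) : G :=
  if l.2 then ginv (pi l.1) else pi l.1.

Definition eval (w : seq letter) : G :=
  foldr (fun l acc => gmul (eval_letter l) acc) (gone G) w.

Definition generates : Prop := forall g : G, exists w, eval w = g.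

Definition dX_le (x y : G) (n : nat) : Prop :=
  exists w, size w <= n /\ gmul x (eval w) = y.

Definition len_le (x y : G) : Prop :=
  forall n, dX_le (gone G) y n -> dX_le (gone G) x n.

Definition geodesicX (w : seq letter) : Prop :=
  forall w', eval w' = eval w -> size w <= size w'.

Definition vertX (x : G) (w : seq letter) (i : nat) : G :=
  gmul x (eval (take i w)).

(* delta-slim geodesic triangles in X (Rips condition): for a geodesic
   triangle with sides labeled u, v, w (starting at 1), every vertex on
   side u lies within delta of a vertex on side v or side w. *)
Definition hyperbolic : Prop :=
  exists delta : nat, forall u v w,
    geodesicX u -> geodesicX v -> geodesicX w ->
    eval (u ++ v ++ w) = gone G ->
    forall i, i <= size u ->
      (exists j, j <= size v /\
         dX_le (vertX (gone G) u i) (vertX (eval u) v j) delta) \/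
      (exists k, k <= size w /\
         dX_le (vertX (gone G) u i) (vertX (eval (u ++ v)) w k) delta).

Definition subgroup (H : G -> Prop) : Prop :=
  H (gone G) /\ (forall x y, H x -> H y -> H (gmul x y)) /\
  (forall x, H x -> H (ginv x)).

Definition quasiconvex (H : G -> Prop) : Prop :=
  exists E : nat, 0 < E /\ forall h w, H h -> geodesicX w -> H (gmul h (eval w)) ->
    forall i, i <= size w -> exists h', H h' /\ dX_le (vertX h w i) h' E.

(* right cosets: Hx = Hy *)
Definition coset_eq (H : G -> Prop) (x y : G) : Prop := H (gmul x (ginv y)).

(* In Y = Gamma(G/H,A): the path starting at Hx labeled w ends at Hy *)
Definition pathY (H : G -> Prop) (x : G) (w : seq letter) (y : G) : Prop :=
  coset_eq H (gmul x (eval w)) y.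

Definition geodesicY (H : G -> Prop) (x : G) (w : seq letter) : Prop :=
  forall w', pathY H x w' (gmul x (eval w)) -> size w <= size w'.

Definition near_geodesicY (H : G -> Prop) (x : G) (w : seq letter) : Prop :=
  exists u w' v, w = u ++ w' ++ v /\ size u <= 1 /\ size v <= 1 /\
    geodesicY H (gmul x (eval u)) w'.

End Words.

From mathcomp Require Import all_boot.
From Stdlib Require Import ClassicalEpsilon.
From mathcomp Require Import zify.
Set Implicit Arguments. Unset Strict Implicit. Unset Printing Implicit Defensive.

(* Write C(K) := 2(K + 2 delta + 1) + 2 delta and (P|Q)_O for the Gromov
   product.  Minimality of f in Hf makes the geodesic [h, hf] leave the
   quasiconvex subgroup H almost orthogonally: (1|hf)_h <= C(E)/2.  If |h| is
   large, the beginning of [1, hf] is therefore close to [1, h], hence to H,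
   and minimality of g in Hg gives (hf|g)_1 <= C(delta + E)/2.  Finally, a near
   geodesic of Y from Hg to Hf has length at most |g| + |f| + 4, so
   d(g, hf) <= |g| + |f| + 4; combining the three estimates bounds |h|. *)

Section GroupLaws.
Variable G : group.

Lemma gmulgV (x : G) : gmul x (ginv x) = gone G.
Proof.
have -> : gmul x (ginv x) = gmul (gmul (ginv (ginv x)) (ginv x)) (gmul x (ginv x)).
  by rewrite gmulV gmul1.
by rewrite -gmulA (gmulA (ginv x) x) gmulV gmul1 gmulV.
Qed.

Lemma gmulg1 (x : G) : gmul x (gone G) = x.
Proof. by rewrite -(gmulV x) gmulA gmulgV gmul1. Qed.

Lemma gmulI (x : G) : injective (gmul x).
Proof. by move=> a b e; rewrite -(gmul1 a) -(gmulV x) -gmulA e gmulA gmulV gmul1. Qed.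

Lemma gmulK (x y : G) : gmul (gmul x y) (ginv y) = x.
Proof. by rewrite -gmulA gmulgV gmulg1. Qed.

Lemma ginvK (x : G) : ginv (ginv x) = x.
Proof. by apply: (@gmulI (ginv x)); rewrite gmulgV gmulV. Qed.

Lemma ginvM (x y : G) : ginv (gmul x y) = gmul (ginv y) (ginv x).
Proof. by apply: (@gmulI (gmul x y)); rewrite gmulgV gmulA gmulK gmulgV. Qed.

End GroupLaws.

Lemma ex_least (P : nat -> Prop) :
  (exists n, P n) -> exists n, P n /\ forall m, P m -> n <= m.
Proof.
move=> [n0 Pn0].
pose p n := if excluded_middle_informative (P n) then true else false.
have pP n : reflect (P n) (p n).
  by rewrite /p; case: excluded_middle_informative => ?; constructor.
have [n /pP Pn minn] := ex_minnP (ex_intro p n0 (introT (pP n0) Pn0)).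
by exists n; split=> // m /pP; apply: minn.
Qed.

Section GeodesicHyperbolicSpace.
Variables (T : Type) (d : T -> T -> nat) (delta : nat).

Definition between (x y z : T) : Prop := d x y + d y z = d x z.

Definition gromov_bound (K : nat) : nat := 2 * (K + 2 * delta + 1) + 2 * delta.

Hypothesis d_sym : forall x y, d x y = d y x.
Hypothesis d_triangle : forall x y z, d x z <= d x y + d y z.

Lemma between_sym x y z : between x y z -> between z y x.
Proof. by rewrite /between (d_sym z y) (d_sym y x) (d_sym z x); lia. Qed.

Hypothesis d_geodesic :
  forall x y i, i <= d x y -> exists2 p, d x p = i & between x p y.
Hypothesis d_slim : forall O P Q p, between O p P ->
  exists2 q, d p q <= delta & between O q Q \/ between P q Q.

(* The point p at distance K + 2 delta + 1 from O on [O, P] is delta-close to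
   [O, Q] or to [P, Q]; the hypothesis rules out the first case, and the second
   one gives the bound. *)
Lemma gromov_product_bound K O P Q :
  (forall p, d O p = K + 2 * delta + 1 -> between O p P -> d O Q <= d p Q + K) ->
  d O P + d O Q <= d P Q + gromov_bound K.
Proof.
move=> far; rewrite /gromov_bound.
case: (leqP (K + 2 * delta + 1) (d O P)) => [leKP|]; last by have := d_triangle O P Q; lia.
have [p dOp bOpP] := d_geodesic leKP.
have := far p dOp bOpP.
have [q dpq [bOqQ | bPqQ]] := d_slim Q bOpP; have := d_triangle p q Q; move: bOpP; rewrite /between.
- by have := d_triangle O q p; move: bOqQ; rewrite /between (d_sym q p); lia.
- have := d_triangle P q p; have := d_triangle O p Q; move: bPqQ.
  by rewrite /between (d_sym q p) (d_sym p P); lia.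
Qed.

End GeodesicHyperbolicSpace.

Section WordMetric.
Variables (G : group) (A : finType) (pi : A -> G).

Definition winv (w : seq (letter A)) : seq (letter A) :=
  rev (map (fun l => (l.1, ~~ l.2)) w).

Lemma eval_cat u v : eval pi (u ++ v) = gmul (eval pi u) (eval pi v).
Proof. by elim: u => [|l u IHu] /=; rewrite ?gmul1 // IHu gmulA. Qed.

Lemma eval_winv w : gmul (eval pi w) (eval pi (winv w)) = gone G.
Proof.
elim: w => [|l w IHw] /=; first by rewrite gmul1.
rewrite /winv map_cons rev_cons -cats1 -/(winv w) eval_cat /= gmulg1.
rewrite gmulA -(gmulA _ _ (eval pi (winv w))) IHw gmulg1.
by case: l => a [] /=; rewrite /eval_letter /= ?gmulV ?gmulgV.
Qed.

(* Junk value 0 when no word joins x to y; all lemmas below assume pi generates G. *)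
Definition dist (x y : G) : nat :=
  epsilon (inhabits 0) (fun n => dX_le pi x y n /\ forall m, dX_le pi x y m -> n <= m).

Definition slim_triangles (delta : nat) : Prop :=
  forall u v w, geodesicX pi u -> geodesicX pi v -> geodesicX pi w ->
    eval pi (u ++ v ++ w) = gone G ->
    forall i, i <= size u ->
      (exists j, j <= size v /\
         dX_le pi (vertX pi (gone G) u i) (vertX pi (eval pi u) v j) delta) \/
      (exists k, k <= size w /\
         dX_le pi (vertX pi (gone G) u i) (vertX pi (eval pi (u ++ v)) w k) delta).

Definition quasiconvex_by (H : G -> Prop) (E : nat) : Prop :=
  forall h w, H h -> geodesicX pi w -> H (gmul h (eval pi w)) ->
    forall i, i <= size w -> exists h', H h' /\ dX_le pi (vertX pi h w i) h' E.

Hypothesis gen : generates pi.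

Lemma dist_spec x y :
  dX_le pi x y (dist x y) /\ forall m, dX_le pi x y m -> dist x y <= m.
Proof.
apply: (epsilon_spec (inhabits 0) (fun n => dX_le pi x y n /\ _)).
apply: ex_least.
have [w ew] := gen (gmul (ginv x) y).
by exists (size w), w; rewrite ew gmulA gmulgV gmul1.
Qed.

Lemma distP x y n : dX_le pi x y n <-> dist x y <= n.
Proof.
have [[w [sw ew]] min] := dist_spec x y.
by split=> [/min // | le_n]; exists w; split=> //; apply: leq_trans le_n.
Qed.

Lemma dist_word x w : dist x (gmul x (eval pi w)) <= size w.
Proof. by apply/distP; exists w. Qed.

Lemma dist_geodesic_word x y : exists2 w, gmul x (eval pi w) = y & size w = dist x y.
Proof.
have [[w [sw ew]] _] := dist_spec x y.
by exists w => //; apply/eqP; rewrite eqn_leq sw -{1}ew dist_word.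
Qed.

Lemma dist_triangle x y z : dist x z <= dist x y + dist y z.
Proof.
have [u eu <-] := dist_geodesic_word x y; have [v ev <-] := dist_geodesic_word y z.
by rewrite -size_cat -ev -eu -gmulA -eval_cat dist_word.
Qed.

Lemma dist_sym x y : dist x y = dist y x.
Proof.
suff le_sym a b : dist b a <= dist a b by apply/eqP; rewrite eqn_leq !le_sym.
have [w <- <-] := dist_geodesic_word a b.
have sw : size (winv w) = size w by rewrite size_rev size_map.
by rewrite -[X in dist _ X](gmulg1 a) -(eval_winv w) gmulA -sw dist_word.
Qed.

Lemma dist_mul2l z x y : dist (gmul z x) (gmul z y) = dist x y.
Proof.
apply/eqP; rewrite eqn_leq; apply/andP; split.
  by have [u <- <-] := dist_geodesic_word x y; rewrite gmulA dist_word.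
have [v ev <-] := dist_geodesic_word (gmul z x) (gmul z y).
have <- : gmul x (eval pi v) = y by apply: (@gmulI _ z); rewrite gmulA.
exact: dist_word.
Qed.

Lemma dist_mulr x y : dist x (gmul x y) = dist (gone G) y.
Proof. by rewrite -{1}(gmulg1 x) dist_mul2l. Qed.

Lemma geodesicX_dist x w : size w = dist x (gmul x (eval pi w)) -> geodesicX pi w.
Proof. by move=> sw w' e; rewrite sw -e dist_word. Qed.

Lemma between_prefix x w j : size w = dist x (gmul x (eval pi w)) ->
  between dist x (gmul x (eval pi (take j w))) (gmul x (eval pi w)).
Proof.
move=> geo_w; rewrite /between.
have split_w : gmul (gmul x (eval pi (take j w))) (eval pi (drop j w)) = gmul x (eval pi w).
  by rewrite -gmulA -eval_cat cat_take_drop.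
have := dist_word x (take j w); have := dist_word (gmul x (eval pi (take j w))) (drop j w).
have := dist_triangle x (gmul x (eval pi (take j w))) (gmul x (eval pi w)).
have : size (take j w) + size (drop j w) = size w by rewrite -size_cat cat_take_drop.
by rewrite split_w; lia.
Qed.

Lemma exists_between x y i : i <= dist x y -> exists2 p, dist x p = i & between dist x p y.
Proof.
move=> le_i; have [w ew sw] := dist_geodesic_word x y.
have b : between dist x (gmul x (eval pi (take i w))) y.
  by rewrite -ew; apply: between_prefix; rewrite ew.
exists (gmul x (eval pi (take i w))) => //.
have := dist_word x (take i w); have := dist_word (gmul x (eval pi (take i w))) (drop i w).
rewrite -gmulA -eval_cat cat_take_drop ew size_drop size_takel ?sw //.
by move: b; rewrite /between; lia.
Qed.

Lemma between_geodesic_word x p y : between dist x p y ->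
  exists u v, [/\ gmul x (eval pi u) = p, gmul p (eval pi v) = y & geodesicX pi (u ++ v)].
Proof.
move=> b; have [u eu su] := dist_geodesic_word x p; have [v ev sv] := dist_geodesic_word p y.
exists u, v; split=> //; apply: (@geodesicX_dist x).
by rewrite eval_cat gmulA eu ev size_cat su sv; exact: b.
Qed.

Lemma slim_between delta : slim_triangles delta -> forall O P Q p, between dist O p P ->
  exists2 q, dist p q <= delta & between dist O q Q \/ between dist P q Q.
Proof.
move=> slim O P Q p bOpP.
have [u1 [u2 [eu1 eu2 geo_u]]] := between_geodesic_word bOpP.
have [v ev sv] := dist_geodesic_word P Q; have [w ew sw] := dist_geodesic_word Q O.
have eu : gmul O (eval pi (u1 ++ u2)) = P by rewrite eval_cat gmulA eu1 eu2.
have euv : gmul O (eval pi ((u1 ++ u2) ++ v)) = Q by rewrite eval_cat gmulA eu ev.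
have geo_v : geodesicX pi v by apply: (@geodesicX_dist P); rewrite ev.
have geo_w : geodesicX pi w by apply: (@geodesicX_dist Q); rewrite ew.
have loop : eval pi ((u1 ++ u2) ++ v ++ w) = gone G.
  by apply: (@gmulI _ O); rewrite gmulg1 catA eval_cat gmulA euv ew.
have le_u1 : size u1 <= size (u1 ++ u2) by rewrite size_cat leq_addr.
have := slim _ _ _ geo_u geo_v geo_w loop _ le_u1.
rewrite /vertX gmul1 take_size_cat // => -[[j [_ near]] | [k [_ near]]].
- exists (gmul P (eval pi (take j v))).
    by rewrite -eu1 -eu -gmulA dist_mul2l; apply/distP.
  by right; rewrite -ev; apply: between_prefix; rewrite ev.
- exists (gmul Q (eval pi (take k w))).
    by rewrite -eu1 -euv -gmulA dist_mul2l; apply/distP.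
  by left; apply: (between_sym dist_sym); rewrite -ew; apply: between_prefix; rewrite ew.
Qed.

Lemma quasiconvex_between H E : quasiconvex_by H E -> forall h1 h2 p,
  H h1 -> H h2 -> between dist h1 p h2 -> exists2 x, H x & dist p x <= E.
Proof.
move=> qcH h1 h2 p Hh1 Hh2 b.
have [u [v [eu ev geo]]] := between_geodesic_word b.
have Hend : H (gmul h1 (eval pi (u ++ v))) by rewrite eval_cat gmulA eu ev.
have [|x [Hx near]] := qcH _ _ Hh1 geo Hend (size u); first by rewrite size_cat leq_addr.
by exists x => //; move: near; rewrite /vertX take_size_cat // eu => /distP.
Qed.

Section Cosets.
Variable H : G -> Prop.
Hypothesis subH : subgroup H.

Definition coset_min (g : G) : Prop := forall x, coset_eq H x g -> len_le pi g x.

Lemma coset_min_dist g x k : coset_min g -> H x -> H k ->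
  dist (gone G) g <= dist x (gmul k g).
Proof.
move=> min_g Hx Hk; have [_ [HM HV]] := subH.
pose y := gmul (ginv x) (gmul k g).
have Hy : coset_eq H y g by rewrite /coset_eq /y -gmulA gmulK; apply: HM (HV _ Hx) Hk.
have [dy _] := dist_spec (gone G) y.
have /distP := min_g y Hy _ dy.
by rewrite -[dist _ y](dist_mul2l x) gmulg1 /y gmulA gmulgV gmul1.
Qed.

Lemma near_geodesicY_dist g w f : near_geodesicY pi H g w ->
  coset_eq H (gmul g (eval pi w)) f ->
  dist g (gmul g (eval pi w)) <= dist (gone G) g + dist (gone G) f + 4.
Proof.
move=> [u [w' [v [-> [su [sv geo_w']]]]]] Hgwf; have [_ [_ HV]] := subH.
(* x is close to f and represents the coset at the end of the middle segment w'. *)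
pose x := gmul f (ginv (eval pi v)).
have [w'' ew'' sw''] := dist_geodesic_word (gmul g (eval pi u)) x.
have le_w' : size w' <= size w''.
  apply: geo_w'; rewrite /pathY /coset_eq ew'' /x.
  have <- : gmul (gmul g (eval pi (u ++ w' ++ v))) (ginv (eval pi v)) =
            gmul (gmul g (eval pi u)) (eval pi w') by rewrite !eval_cat !gmulA gmulK.
  rewrite ginvM ginvK -gmulA (gmulA (ginv _)) gmulV gmul1.
  by have := HV _ Hgwf; rewrite ginvM ginvK.
have dfx : dist f x <= size v.
  rewrite /x dist_mulr -(dist_mul2l (eval pi v)) gmulgV gmulg1.
  by rewrite dist_sym -(gmul1 (eval pi v)) dist_word.
have := dist_word g (u ++ w' ++ v); rewrite !size_cat.
have := dist_triangle (gmul g (eval pi u)) g x; have := dist_triangle g (gone G) x.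
have := dist_triangle (gone G) f x; have := dist_word g u.
by rewrite (dist_sym (gmul g _) g) (dist_sym g (gone G)); lia.
Qed.

Variables (delta E : nat).
Hypotheses (slimX : slim_triangles delta) (qcH : quasiconvex_by H E).

Local Notation word_gromov_product_bound :=
  (gromov_product_bound dist_sym dist_triangle exists_between (slim_between slimX)).

Lemma coset_min_gromov h f : H h -> coset_min f ->
  dist h (gone G) + dist h (gmul h f) <= dist (gone G) (gmul h f) + gromov_bound delta E.
Proof.
move=> Hh min_f; have [H1 _] := subH.
apply: word_gromov_product_bound => p _ b.
have [x Hx dpx] := quasiconvex_between qcH Hh H1 b.
have := coset_min_dist min_f Hx Hh; have := dist_triangle x p (gmul h f).
by rewrite dist_mulr (dist_sym x p); lia.
Qed.

Lemma coset_min_gromov_far h y g : H h -> coset_min g ->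
  dist h (gone G) + dist h y <= dist (gone G) y + gromov_bound delta E ->
  (delta + E) + 3 * delta + 1 + gromov_bound delta E < dist (gone G) h ->
  dist (gone G) y + dist (gone G) g <= dist y g + gromov_bound delta (delta + E).
Proof.
move=> Hh min_g near_h far_h; have [H1 _] := subH.
apply: word_gromov_product_bound => p dp b.
have [q dpq [b1q | byq]] := slim_between slimX h b.
- have [x Hx dqx] := quasiconvex_between qcH H1 Hh b1q.
  have := coset_min_dist min_g Hx H1; rewrite gmul1.
  have := dist_triangle x p g; have := dist_triangle x q p.
  by rewrite (dist_sym x p) (dist_sym x q) (dist_sym q p); lia.
- (* q on [h, y] this close to 1 would make |h| small, as (1|y)_h is small. *)
  have := dist_triangle (gone G) p q; have := dist_triangle (gone G) q y.
  move: byq near_h far_h; rewrite /between (dist_sym h y) (dist_sym h (gone G)) (dist_sym q y).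
  lia.
Qed.

End Cosets.

End WordMetric.

Theorem lemma3p3 (G : group) (A : finType) (pi : A -> G) (H : G -> Prop) :
  generates pi -> hyperbolic pi -> subgroup H -> quasiconvex pi H ->
  exists K1 : nat, 0 < K1 /\
    forall g f : G,
      (forall x, coset_eq H x g -> len_le pi g x) ->
      (forall x, coset_eq H x f -> len_le pi f x) ->
      forall w : seq (letter A),
        pathY pi H g w f -> near_geodesicY pi H g w ->
        forall h : G, H h -> gmul h f = gmul g (eval pi w) ->
          dX_le pi (gone G) h K1.
Proof.
move=> gen [delta slimX] subH [E [_ qcH]].
pose C1 := gromov_bound delta E; pose C2 := gromov_bound delta (delta + E).
pose far := (delta + E) + 3 * delta + 1 + C1.
exists (far + (C1 + C2 + 4)); split; first by lia.
move=> g f min_g min_f w _ near_w h Hh ehf; apply/(distP gen).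
have near_h := coset_min_gromov gen subH slimX qcH Hh min_f.
have Hgwf : coset_eq H (gmul g (eval pi w)) f by rewrite /coset_eq -ehf gmulK.
have short_w := near_geodesicY_dist gen subH near_w Hgwf.
case: (leqP (dist pi (gone G) h) far) => [|far_h]; first by lia.
have near_g := coset_min_gromov_far gen subH slimX qcH Hh min_g near_h far_h.
move: near_h near_g short_w; rewrite -ehf (dist_mulr gen).
by rewrite (dist_sym gen h) (dist_sym gen g); lia.
Qed.
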